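(* For every positive integer $x$ there exist square-primes $a,b$ such that $x=a-b$.
   Context: A square-prime (SP-number) is a positive integer of the form $k^2p$ with $k\ge 2$ an integer and $p$ a prime. *)

From mathcomp Require Import all_boot.

Definition square_prime (n : nat) : Prop :=
  exists k p : nat, 2 <= k /\ prime p /\ n = k ^ 2 * p.

(* Write x = p y with p prime.  When y = u^2 - v^2 with 2 <= v < u (y odd and
   at least 5, or y divisible by 4 and at least 12), x = u^2 p - v^2 p.  The
   essential remaining case is x = c^2 r with r prime: for a prime q <> r and a
   solution of Pell's equation k^2 - r q n^2 = 1, x = (c k)^2 r - (r c n)^2 q.
   Pell's equation is solved classically: Dirichlet's approximation gives
   infinitely many p/q with |p^2 - D q^2| <= 2D, two of them share the norm M and
   the residues of p and q modulo M, and their quotient is a nontrivial unit.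
   The few remaining small x have explicit witnesses. *)

From Stdlib Require Import Reals ZArith Lia Lra Psatz Classical.

Lemma pigeonhole (n : nat) (f : nat -> nat) :
  (forall i, (i <= n)%nat -> (f i < n)%nat) ->
  exists i j, (i < j <= n)%nat /\ f i = f j.
Proof.
revert f; induction n as [|n IH]; intros f Hf.
- specialize (Hf 0%nat (le_n 0)); lia.
- destruct (classic (exists i, (i <= n)%nat /\ f i = f (S n))) as [[i [Hi E]]|Hnew].
  + exists i, (S n); split; [lia|exact E].
  + (* [f (S n)] is not hit on [0..n]: close the gap it leaves and recurse *)
    set (c := f (S n)).
    assert (Hc : forall i, (i <= n)%nat -> f i <> c)
      by (intros i Hi E; apply Hnew; exists i; split; assumption).
    destruct (IH (fun i => if Nat.ltb (f i) c then f i else pred (f i)))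
      as [i [j [Hij E]]].
    * intros i Hi. specialize (Hc i Hi).
      pose proof (Hf i ltac:(lia)); pose proof (Hf (S n) ltac:(lia)).
      destruct (Nat.ltb_spec (f i) c); lia.
    * exists i, j; split; [lia|].
      pose proof (Hc i ltac:(lia)); pose proof (Hc j ltac:(lia)).
      destruct (Nat.ltb_spec (f i) c), (Nat.ltb_spec (f j) c); lia.
Qed.

Open Scope R_scope.

Lemma Int_part_spec r : IZR (Int_part r) <= r < IZR (Int_part r) + 1.
Proof. destruct (base_Int_part r); lra. Qed.

Lemma dirichlet_approx (s : R) (N : nat) : (1 <= N)%nat ->
  exists p q : Z, (1 <= q <= Z.of_nat N)%Z /\ Rabs (IZR q * s - IZR p) * INR N < 1.
Proof.
intros HN.
set (frac := fun i : nat => INR i * s - IZR (Int_part (INR i * s))).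
assert (Hfrac : forall i, 0 <= frac i < 1)
  by (intro i; unfold frac; destruct (Int_part_spec (INR i * s)); lra).
assert (HN1 : 1 <= INR N) by (apply (le_INR 1); lia).
set (bin := fun i => Int_part (INR N * frac i)).
assert (Hbin : forall i, (0 <= bin i < Z.of_nat N)%Z).
{ intro i; unfold bin; destruct (Int_part_spec (INR N * frac i)) as [h1 h2].
  specialize (Hfrac i). split.
  - enough (IZR (-1) < IZR (Int_part (INR N * frac i))) by (apply lt_IZR in H; lia).
    simpl; nra.
  - apply lt_IZR. rewrite <- INR_IZR_INZ. nra. }
destruct (pigeonhole N (fun i => Z.to_nat (bin i))) as [i [j [Hij E]]].
{ intros i _; specialize (Hbin i); lia. }
assert (Ebin : bin i = bin j) by (pose proof (Hbin i); pose proof (Hbin j); lia).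
exists (Int_part (INR j * s) - Int_part (INR i * s))%Z, (Z.of_nat j - Z.of_nat i)%Z.
split; [lia|].
rewrite !minus_IZR, <- !INR_IZR_INZ.
replace ((INR j - INR i) * s - (IZR (Int_part (INR j * s)) - IZR (Int_part (INR i * s))))
  with (frac j - frac i) by (unfold frac; ring).
destruct (Int_part_spec (INR N * frac i)), (Int_part_spec (INR N * frac j)).
fold (bin i) (bin j) in *. rewrite Ebin in *.
rewrite <- (Rabs_pos_eq (INR N)), <- Rabs_mult by lra.
apply Rabs_def1; lra.
Qed.

Lemma dirichlet_approx_lt (s e : R) : 0 < e ->
  exists p q : Z, (1 <= q)%Z /\ Rabs (IZR q * s - IZR p) < e /\
    Rabs (IZR q * s - IZR p) * IZR q < 1.
Proof.
intros he. destruct (archimed (/ e)) as [Hup _].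
assert (he' : 0 < / e) by (apply Rinv_0_lt_compat; lra).
assert (Hpos : (0 < up (/ e))%Z) by (apply lt_IZR; lra).
destruct (dirichlet_approx s (Z.to_nat (up (/ e)))) as [p [q [Hq Herr]]]; [lia|].
exists p, q. rewrite INR_IZR_INZ, Z2Nat.id in Herr by lia.
assert (IZR q <= IZR (up (/ e))) by (apply IZR_le; lia).
assert (1 <= IZR q) by (apply IZR_le; lia).
pose proof (Rabs_pos (IZR q * s - IZR p)).
split; [lia|split; [|nra]].
apply (Rmult_lt_reg_r (/ e)); [assumption|].
rewrite Rinv_r by lra. nra.
Qed.

Lemma mixed_radix_inj (B a1 a2 b1 b2 : Z) :
  (0 <= b1 < B)%Z -> (0 <= b2 < B)%Z -> (a1 * B + b1 = a2 * B + b2)%Z ->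
  a1 = a2 /\ b1 = b2.
Proof.
intros. enough (a1 = a2) by (subst; lia).
destruct (Z.lt_trichotomy a1 a2) as [h|[h|h]]; [|assumption|]; nia.
Qed.

Lemma Zmod_abs_eq_add_mul (M a b : Z) : M <> 0%Z ->
  (a mod Z.abs M = b mod Z.abs M)%Z -> exists u, b = (a + M * u)%Z.
Proof.
intros HM E.
pose proof (Z.div_mod a (Z.abs M) ltac:(lia)).
pose proof (Z.div_mod b (Z.abs M) ltac:(lia)).
destruct (Z_le_gt_dec 0 M).
- rewrite Z.abs_eq in * by lia. exists (b / M - a / M)%Z. lia.
- rewrite Z.abs_neq in * by lia. exists (a / - M - b / - M)%Z. lia.
Qed.

(* Dividing [(p1 + q1 sqrt D)(p2 - q2 sqrt D)] by [M]: the two approximations are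
   congruent modulo [M], so the quotient is an integral unit of norm 1. *)
Lemma pell_of_congruent_pair (D p1 q1 u v M : Z) :
  M <> 0%Z -> (1 <= q1)%Z -> (1 <= q1 + M * v)%Z -> (u, v) <> (0%Z, 0%Z) ->
  (p1 * p1 - D * (q1 * q1) = M)%Z ->
  ((p1 + M * u) * (p1 + M * u) - D * ((q1 + M * v) * (q1 + M * v)) = M)%Z ->
  exists k n, (0 < n)%Z /\ (k * k - D * (n * n) = 1)%Z.
Proof.
intros HM Hq1 Hq2 Huv E1 E2.
set (w := (p1 * u - D * q1 * v)%Z). set (Y := (p1 * v - u * q1)%Z).
assert (Hw : (2 * w + M * (u * u - D * (v * v)) = 0)%Z).
{ apply (Z.mul_reg_l _ _ M HM). unfold w. nia. }
assert (HY : Y <> 0%Z).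
{ intro HY0. apply Huv. unfold Y in HY0.
  (* [Y = 0] makes the two pairs proportional, and equal norms force equality *)
  assert (Huq : (u * q1 = p1 * v)%Z) by lia.
  assert (Hqw : (q1 * w = v * M)%Z).
  { transitivity (p1 * (u * q1) - D * (q1 * q1) * v)%Z; [unfold w; ring|].
    rewrite Huq, <- E1; ring. }
  assert (Hqn : (q1 * q1 * (u * u - D * (v * v)) = v * v * M)%Z).
  { transitivity ((u * q1) * (u * q1) - D * (q1 * q1) * (v * v))%Z; [ring|].
    rewrite Huq, <- E1; ring. }
  assert (Hv : (M * (v * (2 * q1 + M * v)) = 0)%Z).
  { transitivity (2 * (v * M) * q1 + M * (v * v * M))%Z; [ring|].
    rewrite <- Hqw, <- Hqn.
    transitivity (q1 * q1 * (2 * w + M * (u * u - D * (v * v))))%Z; [ring|].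
    rewrite Hw; ring. }
  apply Z.mul_eq_0 in Hv as [|Hv]; [contradiction|].
  apply Z.mul_eq_0 in Hv as [->|]; [|lia].
  assert (u = 0%Z) by nia. subst u. reflexivity. }
exists (1 + w)%Z, (Z.abs Y). split; [lia|].
rewrite <- Z.abs_mul, Z.abs_eq by nia.
assert (Hbrahmagupta : (w * w - D * (Y * Y) = (p1 * p1 - D * (q1 * q1)) * (u * u - D * (v * v)))%Z)
  by (unfold w, Y; ring).
nia.
Qed.

Section Pell.

Variable D : Z.
Hypothesis D_pos : (0 < D)%Z.
Hypothesis D_nonsquare : forall p q : Z, q <> 0%Z -> (p * p <> D * (q * q))%Z.

Let s := sqrt (IZR D).

Let err (pq : Z * Z) := Rabs (IZR (snd pq) * s - IZR (fst pq)).

Let norm (pq : Z * Z) := (fst pq * fst pq - D * (snd pq * snd pq))%Z.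

Lemma sqrt_D_facts : 0 <= s /\ s * s = IZR D /\ s <= IZR D.
Proof.
assert (h : 1 <= IZR D) by (apply IZR_le; lia).
unfold s. pose proof (sqrt_pos (IZR D)). rewrite sqrt_sqrt by lra.
split; [assumption|split; [reflexivity|]].
pose proof (sqrt_sqrt (IZR D)). nra.
Qed.

Lemma norm_neq0 pq : (1 <= snd pq)%Z -> norm pq <> 0%Z.
Proof. intros Hq E. apply (D_nonsquare (fst pq) (snd pq)); unfold norm in E; lia. Qed.

Lemma err_gt0 pq : (1 <= snd pq)%Z -> 0 < err pq.
Proof.
intros Hq. destruct sqrt_D_facts as [_ [Hs _]].
destruct (Rabs_pos (IZR (snd pq) * s - IZR (fst pq))) as [|E]; [assumption|].
exfalso. apply (norm_neq0 pq Hq), eq_IZR.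
assert (Hp : IZR (fst pq) = IZR (snd pq) * s)
  by (destruct (Req_dec (IZR (snd pq) * s - IZR (fst pq)) 0) as [|Hne];
      [lra|apply Rabs_no_R0 in Hne; unfold err in E; lra]).
unfold norm. rewrite minus_IZR, !mult_IZR, Hp, <- Hs. ring.
Qed.

(* [p^2 - D q^2 = t^2 - 2 q s t] for [t = q s - p], and [|q t| < 1]. *)
Lemma norm_bound pq : (1 <= snd pq)%Z -> err pq * IZR (snd pq) < 1 ->
  (Z.abs (norm pq) <= 2 * D)%Z.
Proof.
destruct pq as [p q]; unfold err, norm; cbn [fst snd]. intros Hq He.
destruct sqrt_D_facts as [Hs0 [Hs HsD]].
assert (Hq1 : 1 <= IZR q) by (apply IZR_le; lia).
set (t := IZR q * s - IZR p) in *.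
assert (E : IZR (p * p - D * (q * q)) = t * t - 2 * s * (IZR q * t))
  by (unfold t; rewrite minus_IZR, !mult_IZR, <- Hs; ring).
assert (Hqt : Rabs (IZR q * t) < 1) by (rewrite Rabs_mult, Rabs_pos_eq; lra).
assert (Ht : Rabs t < 1) by nra.
assert (Hlt : Rabs (IZR (p * p - D * (q * q))) < IZR (2 * D + 1)).
{ rewrite E, plus_IZR, mult_IZR.
  eapply Rle_lt_trans; [apply Rabs_triang|].
  rewrite Rabs_Ropp, Rabs_mult, (Rabs_mult (2 * s)), Rabs_mult.
  rewrite (Rabs_pos_eq 2), (Rabs_pos_eq s) by lra.
  pose proof (Rabs_pos t). nra. }
rewrite <- abs_IZR in Hlt. apply lt_IZR in Hlt. lia.
Qed.

Let good (pq : Z * Z) := (1 <= snd pq)%Z /\ (Z.abs (norm pq) <= 2 * D)%Z.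

Lemma good_approx e : 0 < e -> exists pq, good pq /\ err pq < e.
Proof.
intros he. destruct (dirichlet_approx_lt s e he) as [p [q [Hq [He Hqe]]]].
exists (p, q). split; [split; [exact Hq|apply norm_bound; assumption]|exact He].
Qed.

(* Irrationality of [sqrt D] makes every error positive, so the errors can be
   forced to decrease strictly: the approximations are pairwise distinct. *)
Lemma good_approx_chain (n : nat) :
  exists g : nat -> Z * Z, (forall i, (i <= n)%nat -> good (g i)) /\
    (forall i j, (i < j <= n)%nat -> err (g j) < err (g i)).
Proof.
induction n as [|n [g [Hg Hdec]]].
- destruct (good_approx 1 Rlt_0_1) as [pq [Hpq _]].
  exists (fun _ => pq). split; [intros; exact Hpq|intros; lia].
- destruct (good_approx (err (g n)) (err_gt0 _ (proj1 (Hg n (le_n n)))))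
    as [pq [Hpq Hlt]].
  exists (fun i => if Nat.eqb i (S n) then pq else g i). split.
  + intros i Hi. destruct (Nat.eqb_spec i (S n)); [exact Hpq|apply Hg; lia].
  + intros i j Hij.
    destruct (Nat.eqb_spec j (S n)), (Nat.eqb_spec i (S n)); try lia.
    * destruct (Nat.eq_dec i n) as [->|Hin]; [assumption|].
      pose proof (Hdec i n ltac:(lia)). lra.
    * apply Hdec; lia.
Qed.

(* Mixed-radix encoding of the class [(norm, p mod |norm|, q mod |norm|)]. *)
Let class_code (pq : Z * Z) :=
  (((norm pq + 2 * D) * (2 * D) + fst pq mod Z.abs (norm pq)) * (2 * D)
   + snd pq mod Z.abs (norm pq))%Z.

Lemma class_code_bound pq : good pq ->
  (0 <= class_code pq < (4 * D + 1) * (2 * D) * (2 * D))%Z.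
Proof.
intros [Hq HM]. unfold class_code.
pose proof (norm_neq0 pq Hq).
pose proof (Z.mod_pos_bound (fst pq) (Z.abs (norm pq)) ltac:(lia)).
pose proof (Z.mod_pos_bound (snd pq) (Z.abs (norm pq)) ltac:(lia)).
assert (0 <= (norm pq + 2 * D) * (2 * D) + fst pq mod Z.abs (norm pq)
          <= (4 * D + 1) * (2 * D) - 1)%Z by nia.
nia.
Qed.

Lemma pell_solution_exists :
  exists k n : Z, (0 < n)%Z /\ (k * k - D * (n * n) = 1)%Z.
Proof.
set (K := ((4 * D + 1) * (2 * D) * (2 * D))%Z).
destruct (good_approx_chain (Z.to_nat K)) as [g [Hg Hdec]].
destruct (pigeonhole (Z.to_nat K) (fun i => Z.to_nat (class_code (g i))))
  as [i [j [Hij Ecode]]].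
{ intros i Hi. pose proof (class_code_bound _ (Hg i Hi)) as B. fold K in B. lia. }
pose proof (class_code_bound _ (Hg i ltac:(lia))) as Bi.
pose proof (class_code_bound _ (Hg j ltac:(lia))) as Bj.
assert (Ec : class_code (g i) = class_code (g j)) by lia.
pose proof (Hdec i j Hij) as Herr.
destruct (Hg i ltac:(lia)) as [Hq1 HM1], (Hg j ltac:(lia)) as [Hq2 HM2].
pose proof (norm_neq0 _ Hq1) as HM1'. pose proof (norm_neq0 _ Hq2) as HM2'.
unfold class_code in Ec.
destruct (g i) as [p1 q1], (g j) as [p2 q2]. unfold norm in *; cbn [fst snd] in *.
pose proof (Z.mod_pos_bound p1 (Z.abs (p1 * p1 - D * (q1 * q1))) ltac:(lia)).
pose proof (Z.mod_pos_bound q1 (Z.abs (p1 * p1 - D * (q1 * q1))) ltac:(lia)).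
pose proof (Z.mod_pos_bound p2 (Z.abs (p2 * p2 - D * (q2 * q2))) ltac:(lia)).
pose proof (Z.mod_pos_bound q2 (Z.abs (p2 * p2 - D * (q2 * q2))) ltac:(lia)).
apply mixed_radix_inj in Ec as [Ec Eq]; try lia.
apply mixed_radix_inj in Ec as [EM Ep]; try lia.
assert (EM' : (p2 * p2 - D * (q2 * q2) = p1 * p1 - D * (q1 * q1))%Z) by lia.
rewrite EM' in Ep, Eq.
set (M := (p1 * p1 - D * (q1 * q1))%Z) in *.
destruct (Zmod_abs_eq_add_mul M p1 p2 HM1' Ep) as [u ->].
destruct (Zmod_abs_eq_add_mul M q1 q2 HM1' Eq) as [v ->].
apply (pell_of_congruent_pair D p1 q1 u v M); try assumption; try reflexivity.
intro Huv. injection Huv as -> ->. rewrite !Z.mul_0_r, !Z.add_0_r in Herr. lra.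
Qed.

End Pell.
Close Scope R_scope.

From mathcomp Require Import all_boot zify.

Definition sp_difference (x : nat) :=
  exists a b : nat, square_prime a /\ square_prime b /\ a = x + b.

Lemma square_prime_sqr_mul k p : 2 <= k -> prime p -> square_prime (k ^ 2 * p).
Proof. by move=> hk hp; exists k, p. Qed.

Lemma sp_difference_witness k1 p1 k2 p2 x :
  2 <= k1 -> prime p1 -> 2 <= k2 -> prime p2 -> k1 ^ 2 * p1 = x + k2 ^ 2 * p2 ->
  sp_difference x.
Proof.
move=> hk1 hp1 hk2 hp2 E.
by exists (k1 ^ 2 * p1), (k2 ^ 2 * p2); split; [|split]; try apply: square_prime_sqr_mul.
Qed.

Lemma sp_difference_prime_mul_odd p y : prime p -> odd y -> 5 <= y -> sp_difference (p * y).
Proof.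
by move=> hp yo y5; apply: (sp_difference_witness (y./2).+1 p y./2 p) => //; nia.
Qed.

Lemma sp_difference_prime_mul4 p w : prime p -> 3 <= w -> sp_difference (p * (4 * w)).
Proof.
by move=> hp hw; apply: (sp_difference_witness w.+1 p w.-1 p) => //; nia.
Qed.

(* The exponent of [r] in [a * a] is even, in [r * q * (b * b)] it is odd. *)
Lemma sqr_neq_primes_mul_sqr r q a b :
  prime r -> prime q -> r != q -> 0 < b -> a * a != r * q * (b * b).
Proof.
move=> pr pq nrq b0; apply/eqP => E.
have r0 := prime_gt0 pr; have q0 := prime_gt0 pq.
have a0 : 0 < a by nia.
have := congr1 (fun n => odd (logn r n)) E.
rewrite !lognM ?muln_gt0 ?r0 ?q0 ?a0 ?b0 // (logn_prime r pr) (logn_prime r pq).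
by rewrite eqxx (negbTE nrq) /= !oddD !addbb.
Qed.

Lemma pell_primes r q : prime r -> prime q -> r != q ->
  exists k n, 0 < n /\ k ^ 2 = 1 + r * q * n ^ 2.
Proof.
move=> pr pq nrq; have r0 := prime_gt0 pr; have q0 := prime_gt0 pq.
have [|p' q' Hq'|k [n [n0 E]]] := pell_solution_exists (Z.of_nat (r * q)); first lia.
  have Hb : 0 < Z.abs_nat q' by lia.
  by move=> Hp; move/eqP: (sqr_neq_primes_mul_sqr _ _ (Z.abs_nat p') _ pr pq nrq Hb); apply; nia.
exists (Z.abs_nat k), (Z.to_nat n); split; first lia.
rewrite !expnS !expn0 !muln1; nia.
Qed.

(* With [k^2 = 1 + r q n^2]: [(c k)^2 r - (r c n)^2 q = c^2 r]. *)
Lemma sp_difference_sqr_mul_prime c r : prime r -> 0 < c -> sp_difference (c ^ 2 * r).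
Proof.
move=> pr c0; set q := if r == 2 then 3 else 2.
have pq : prime q by rewrite /q; case: ifP.
have nrq : r != q by rewrite /q; case: ifP => [/eqP ->|/negbT].
have [k [n [n0 E]]] := pell_primes _ _ pr pq nrq.
have r1 := prime_gt1 pr; have q1 := prime_gt1 pq.
apply: (sp_difference_witness (c * k) r (r * c * n) q) => //; nia.
Qed.

Lemma sp_difference_odd x : odd x -> sp_difference x.
Proof.
move=> xo; have [->|x1] : x = 1 \/ 1 < x by lia.
  by apply: (sp_difference_witness 2 7 3 3).
have pp : prime (pdiv x) := pdiv_prime x1.
have Ex : x = pdiv x * (x %/ pdiv x) by rewrite mulnC divnK ?pdiv_dvd.
set p := pdiv x in pp Ex *; set y := x %/ p in Ex *.
have [po yo] : odd p /\ odd y by move: xo; rewrite Ex oddM => /andP.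
rewrite {}Ex; have [->|[->|y5]] : y = 1 \/ y = 3 \/ 5 <= y by lia.
- by rewrite muln1 -(mul1n p) -(exp1n 2); apply: sp_difference_sqr_mul_prime.
- have [->|p5] : p = 3 \/ 5 <= p by have := prime_gt1 pp; lia.
    by apply: (sp_difference_witness 3 3 3 2).
  by rewrite mulnC; apply: sp_difference_prime_mul_odd.
- exact: sp_difference_prime_mul_odd.
Qed.

Lemma sp_difference_2_mul_odd y : odd y -> sp_difference (2 * y).
Proof.
move=> yo; have [->|[->|y5]] : y = 1 \/ y = 3 \/ 5 <= y by lia.
- by rewrite -(mul1n (2 * 1)) -(exp1n 2); apply: sp_difference_sqr_mul_prime.
- by apply: (sp_difference_witness 3 2 2 3).
- exact: sp_difference_prime_mul_odd.
Qed.

Lemma sp_difference_4_mul_odd z : odd z -> sp_difference (4 * z).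
Proof.
move=> zo; have [->|z1] : z = 1 \/ 1 < z by lia.
  by apply: (sp_difference_witness 2 3 2 2).
have pq : prime (pdiv z) := pdiv_prime z1.
have Ez : z = pdiv z * (z %/ pdiv z) by rewrite mulnC divnK ?pdiv_dvd.
set q := pdiv z in pq Ez *; set w := z %/ q in Ez *.
have wo : odd w by move: zo; rewrite Ez oddM => /andP[].
rewrite {}Ez; have [->|w3] : w = 1 \/ 3 <= w by lia.
- by rewrite muln1; apply: (sp_difference_sqr_mul_prime 2).
- by rewrite mulnCA; apply: sp_difference_prime_mul4.
Qed.

Lemma sp_difference_8_mul w : 0 < w -> sp_difference (8 * w).
Proof.
move=> w0; have [->|[->|w3]] : w = 1 \/ w = 2 \/ 3 <= w by lia.
- by apply: (sp_difference_sqr_mul_prime 2 2).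
- by apply: (sp_difference_witness 2 7 2 3).
- have -> : 8 * w = 2 * (4 * w) by lia.
  exact: sp_difference_prime_mul4.
Qed.

Theorem lemma3p1 (x : nat) : 0 < x ->
  exists a b : nat, square_prime a /\ square_prime b /\ a = x + b.
Proof.
move=> x0; case/boolP: (odd x) => [|/negPn] xo; first exact: sp_difference_odd.
have -> : x = 2 * (x %/ 2) by lia.
case/boolP: (odd (x %/ 2)) => [|/negPn] yo; first exact: sp_difference_2_mul_odd.
have -> : 2 * (x %/ 2) = 4 * (x %/ 4) by lia.
case/boolP: (odd (x %/ 4)) => [|/negPn] zo; first exact: sp_difference_4_mul_odd.
have -> : 4 * (x %/ 4) = 8 * (x %/ 8) by lia.
apply: sp_difference_8_mul; lia.
Qed.
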